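(* Let $r,I_1,I_2$ be positive integers with $r\le I_1I_2$. Let $\Psi=(\Gamma_1,\dots,\Gamma_r)$ and $\Psi'=(\Gamma'_1,\dots,\Gamma'_r)$ be tripartite states of format $r\times I_1\times I_2$ such that $\Gamma_1,\dots,\Gamma_r$ are linearly independent and $\Gamma'_1,\dots,\Gamma'_r$ are linearly independent. Choose complementary states $\overline{\Psi}=(\Gamma_{r+1},\dots,\Gamma_{I_1I_2})$ and $\overline{\Psi}'=(\Gamma'_{r+1},\dots,\Gamma'_{I_1I_2})$. Form the invertible $I_1I_2\times I_1I_2$ matrices $U=(\mathcal V(\Gamma_1),\dots,\mathcal V(\Gamma_{I_1I_2}))$ and $U'=(\mathcal V(\Gamma'_1),\dots,\mathcal V(\Gamma'_{I_1I_2}))$. Then $\Psi'$ and $\Psi$ are SLOCC equivalent if and only if there exist an invertible $P\in\mathbb C^{r\times r}$, an invertible $\overline P\in\mathbb C^{(I_1I_2-r)\times(I_1I_2-r)}$ and an arbitrary $Y\in\mathbb C^{r\times(I_1I_2-r)}$ such that, with $$\widetilde P=\begin{pmatrix}P&Y\\0&\overline P\end{pmatrix},$$ we have $$\operatorname{rank}\,\mathcal R\big(U\widetilde P\,U'^{-1}\big)=1 .$$ Equivalently, $U\widetilde P\,U'^{-1}$ is a Kronecker product $C\otimes B$ with $C\in\mathbb C^{I_2\times I_2}$ and $B\in\mathbb C^{I_1\times I_1}$. When $r=I_1I_2$, there are no complementary states and $\widetilde P=P$.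
   Context: **Tripartite states as tuples.** A tripartite (not necessarily normalized) state of format $r\times I_1\times I_2$ is written as a tuple $\Psi=(\Gamma_1,\dots,\Gamma_r)$ with $\Gamma_k\in\mathbb C^{I_1\times I_2}$. It stands for the vector $$\sum_{k=1}^r\sum_{i_1,i_2}(\Gamma_k)_{i_1i_2}\,|k\rangle|i_1\rangle|i_2\rangle\in\mathbb C^r\otimes\mathbb C^{I_1}\otimes\mathbb C^{I_2}.$$ **SLOCC equivalence.** Two states $|\Psi'\rangle,|\Psi\rangle$ of $N$ parties are SLOCC equivalent if $|\Psi'\rangle=A_1\otimes\cdots\otimes A_N|\Psi\rangle$ for some invertible matrices $A_j$. For tuples this reads: there are invertible $P_0\in\mathbb C^{r\times r}$, $A_1\in\mathbb C^{I_1\times I_1}$ and $A_2\in\mathbb C^{I_2\times I_2}$ with $$\Gamma'_k=\sum_l (P_0)_{kl}\,A_1\Gamma_lA_2^{\mathrm T}\quad\text{for all }k.$$ **Vectorization.** For $\Gamma\in\mathbb C^{I_1\times I_2}$, $\mathcal V(\Gamma)\in\mathbb C^{I_1I_2}$ is the column-stacking vectorization $(\Gamma_{11},\dots,\Gamma_{I_11},\Gamma_{12},\dots,\Gamma_{I_1I_2})^{\mathrm T}$. It satisfies $\mathcal V(B\Gamma C^{\mathrm T})=(C\otimes B)\mathcal V(\Gamma)$. **Complementary state.** If $\Gamma_1,\dots,\Gamma_r$ are linearly independent, a complementary state of $(\Gamma_1,\dots,\Gamma_r)$ is any tuple $(\Gamma_{r+1},\dots,\Gamma_{I_1I_2})$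 of matrices in $\mathbb C^{I_1\times I_2}$ such that $\Gamma_1,\dots,\Gamma_{I_1I_2}$ form a basis of $\mathbb C^{I_1\times I_2}$. **Realignment.** Partition an $I_1I_2\times I_1I_2$ matrix $M$ into an $I_2\times I_2$ array of blocks $M_{ij}\in\mathbb C^{I_1\times I_1}$. Then $$\mathcal R(M)=\big(\mathcal V(M_{11}),\dots,\mathcal V(M_{I_21}),\mathcal V(M_{12}),\dots,\mathcal V(M_{I_2I_2})\big)^{\mathrm T}\in\mathbb C^{I_2^2\times I_1^2}.$$ With this convention, $\mathcal R(M)$ has rank $1$ exactly when $M=C\otimes B$ with $C\in\mathbb C^{I_2\times I_2}$, $B\in\mathbb C^{I_1\times I_1}$ and $M\neq 0$. *)

From HB Require Import structures.
From mathcomp Require Import all_boot all_order all_algebra.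
Set Implicit Arguments. Unset Strict Implicit. Unset Printing Implicit Defensive.
Import Order.TTheory GRing.Theory Num.Theory.
Local Open Scope ring_scope.

(* 0-based column-stacking index: (a, b) |-> a + m * b, in 'I_(m * n). *)
Lemma vidx_subproof (m n : nat) (a : 'I_m) (b : 'I_n) : (a + m * b < m * n)%N.
Proof.
have H1 : (a + m * b < m + m * b)%N by rewrite ltn_add2r.
apply: (leq_trans H1); rewrite -mulnS leq_mul2l; apply/orP; right; exact: ltn_ord b.
Qed.

Definition vidx (m n : nat) (a : 'I_m) (b : 'I_n) : 'I_(m * n) :=
  Ordinal (vidx_subproof a b).

(* inverse of vidx (always Some, vidx being a bijection) *)
Definition unvidx (m n : nat) (k : 'I_(m * n)) : option ('I_m * 'I_n) :=
  [pick ab : 'I_m * 'I_n | vidx ab.1 ab.2 == k].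

Section Defs.
Variable K : fieldType.

Definition vecV (I1 I2 : nat) (G : 'M[K]_(I1, I2)) : 'cV[K]_(I1 * I2) :=
  \col_k (if unvidx k is Some ab then G ab.1 ab.2 else 0).

(* Kronecker product C (x) B, C : I2 x I2 (outer), B : I1 x I1 (inner). *)
Definition kron (I1 I2 : nat) (C : 'M[K]_I2) (B : 'M[K]_I1) : 'M[K]_(I1 * I2) :=
  \matrix_(p, q) (if unvidx p is Some ai then
                   if unvidx q is Some bj then C ai.2 bj.2 * B ai.1 bj.1 else 0
                 else 0).

(* Realignment: block M_ij (i,j < I2), entry (a,b) is M (a + I1 i) (b + I1 j);
   R(M) has row i + I2 j equal to V(M_ij)^T. *)
Definition realign (I1 I2 : nat) (M : 'M[K]_(I1 * I2)) : 'M[K]_(I2 * I2, I1 * I1) :=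
  \matrix_(p, q) (if unvidx p is Some ij then
                   if unvidx q is Some ab then
                     M (vidx ab.1 ij.1) (vidx ab.2 ij.2) else 0
                 else 0).

Definition slocc (r I1 I2 : nat) (G' G : 'I_r -> 'M[K]_(I1, I2)) : Prop :=
  exists (P0 : 'M[K]_r) (A1 : 'M[K]_I1) (A2 : 'M[K]_I2),
    [/\ P0 \in unitmx, A1 \in unitmx, A2 \in unitmx &
        forall k, G' k = \sum_l P0 k l *: (A1 *m G l *m A2^T)].

Definition tseq (r I1 I2 : nat) (G : 'I_r -> 'M[K]_(I1, I2)) : seq 'M[K]_(I1, I2) :=
  [seq G k | k <- enum 'I_r].

Definition complementary (r I1 I2 : nat) (G : 'I_r -> 'M[K]_(I1, I2))
  (Gb : 'I_(I1 * I2 - r) -> 'M[K]_(I1, I2)) : bool :=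
  basis_of fullv (tseq G ++ tseq Gb).

Definition Umx0 (r I1 I2 : nat) (G : 'I_r -> 'M[K]_(I1, I2))
  (Gb : 'I_(I1 * I2 - r) -> 'M[K]_(I1, I2)) : 'M[K]_(I1 * I2, r + (I1 * I2 - r)) :=
  row_mx (\matrix_(p, k) vecV (G k) p 0) (\matrix_(p, k) vecV (Gb k) p 0).

Definition Ptilde (r m : nat) (P : 'M[K]_r) (Y : 'M[K]_(r, m)) (Pb : 'M[K]_m)
  : 'M[K]_(r + m) := block_mx P Y 0 Pb.

Definition UPU (r I1 I2 : nat) (hr : (r <= I1 * I2)%N)
  (G Gp : 'I_r -> 'M[K]_(I1, I2)) (Gb Gbp : 'I_(I1 * I2 - r) -> 'M[K]_(I1, I2))
  (P : 'M[K]_r) (Y : 'M[K]_(r, I1 * I2 - r)) (Pb : 'M[K]_(I1 * I2 - r))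
  : 'M[K]_(I1 * I2) :=
  castmx (erefl _, subnKC hr) (Umx0 G Gb *m Ptilde P Y Pb)
  *m invmx (castmx (erefl _, subnKC hr) (Umx0 Gp Gbp)).

End Defs.

(* A local operator [A1 (x) A2] acts on vectorized states as the Kronecker
   product [A2 (x) A1], so [Psi'] and [Psi] are SLOCC equivalent iff some
   invertible [M = C (x) B] maps the span of the [V(G'_k)] (the first [r]
   columns [W'] of [U']) into the span of the [V(G_k)], i.e. [M W' = W P].
   For an invertible [M] this is the same as [U^-1 M U'] being block upper
   triangular, i.e. [M = U Ptilde U'^-1]; conversely such an [M] that is a
   Kronecker product is invertible, hence so are [C] and [B], which give the
   local operators.  Finally the realignment of [C (x) B] is the rank-one matrix
   [V(C) V(B)^T], and every [M] with rank-one realignment factors this way. *)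

From HB Require Import structures.
From mathcomp Require Import all_boot all_order all_algebra.
Set Implicit Arguments. Unset Strict Implicit. Unset Printing Implicit Defensive.
Import GRing.Theory.
Local Open Scope ring_scope.

Lemma vidx_inj (m n : nat) : injective (fun ab : 'I_m * 'I_n => vidx ab.1 ab.2).
Proof.
move=> [a b] [a' b'] /= /(congr1 val) /= eq_ab.
have m_gt0 : (0 < m)%N by case: m a {eq_ab a'} => [[]|].
have eq_a : a = a' :> nat.
  move: (congr1 (modn^~ m) eq_ab) => /=.
  by rewrite !(addnC _ (m * _))%N !(mulnC m) !modnMDl !modn_small.
have eq_b : b = b' :> nat.
  move: eq_ab; rewrite eq_a => /addnI /eqP; rewrite eqn_mul2l => /orP[|/eqP //].
  by rewrite eqn0Ngt m_gt0.
by congr pair; apply: val_inj.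
Qed.

Lemma vidx_bij (m n : nat) : bijective (fun ab : 'I_m * 'I_n => vidx ab.1 ab.2).
Proof. by apply: inj_card_bij; [exact: vidx_inj | rewrite card_prod !card_ord]. Qed.

Lemma vidx_surj (m n : nat) (k : 'I_(m * n)) : exists a b, k = vidx a b.
Proof. by have [g _ gK] := vidx_bij m n; exists (g k).1, (g k).2; rewrite gK. Qed.

Lemma unvidxE (m n : nat) (a : 'I_m) (b : 'I_n) : unvidx (vidx a b) = Some (a, b).
Proof.
rewrite /unvidx; case: pickP => [[a' b'] /eqP eq_ab|/(_ (a, b))]; last by rewrite eqxx.
by congr Some; apply: (@vidx_inj m n); rewrite /= eq_ab.
Qed.

Lemma vidx_eq (m n : nat) (a b : 'I_m) (i j : 'I_n) :
  (vidx a i == vidx b j) = (a == b) && (i == j).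
Proof.
apply/eqP/andP => [eq_ai|[/eqP-> /eqP->] //].
by have [-> ->] : (a, i) = (b, j) by apply: (@vidx_inj m n).
Qed.

Lemma big_vidx (R : nmodType) (m n : nat) (F : 'I_(m * n) -> R) :
  \sum_k F k = \sum_a \sum_b F (vidx a b).
Proof. by rewrite (reindex _ (onW_bij _ (vidx_bij m n))) pair_bigA. Qed.

Lemma unitmx_neq0 (R : comUnitRingType) n (A : 'M[R]_n) :
  (0 < n)%N -> A \in unitmx -> A != 0.
Proof. by case: n A => // n A _; apply: contraTneq => ->; rewrite unitmxE det0 unitr0. Qed.

Lemma mul_col_row_eq0 (R : idomainType) m n (u : 'cV[R]_m) (v : 'rV[R]_n) :
  u *m v = 0 -> u = 0 \/ v = 0.
Proof.
move/matrixP => uv0; case: (pickP (fun i => u i 0 != 0)) => [i ui_neq0|u0]; last first.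
  by left; apply/colP => i; move/negbFE/eqP: (u0 i); rewrite mxE.
right; apply/rowP => j; move: (uv0 i j); rewrite !mxE big_ord1 => /eqP.
by rewrite mulf_eq0 (negPf ui_neq0) => /eqP.
Qed.

Section KroneckerRealignment.
Variable K : fieldType.

Lemma vecVE I1 I2 (X : 'M[K]_(I1, I2)) a b : vecV X (vidx a b) 0 = X a b.
Proof. by rewrite mxE unvidxE. Qed.

Lemma kronE I1 I2 (C : 'M[K]_I2) (B : 'M[K]_I1) a i b j :
  kron C B (vidx a i) (vidx b j) = C i j * B a b.
Proof. by rewrite mxE !unvidxE. Qed.

Lemma realignE I1 I2 (M : 'M[K]_(I1 * I2)) i j a b :
  realign M (vidx i j) (vidx a b) = M (vidx a i) (vidx b j).
Proof. by rewrite mxE !unvidxE. Qed.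

Fact vecV_is_semilinear I1 I2 : semilinear (@vecV K I1 I2).
Proof.
split=> [c X|X Y]; apply/colP => k; have [a [i ->]] := vidx_surj k.
  by rewrite vecVE [RHS]mxE vecVE mxE.
by rewrite vecVE [RHS]mxE !vecVE mxE.
Qed.
HB.instance Definition _ I1 I2 :=
  GRing.isSemilinear.Build K 'M[K]_(I1, I2) 'cV[K]_(I1 * I2) _ (@vecV K I1 I2)
    (vecV_is_semilinear I1 I2).

Lemma vecV_inj I1 I2 : injective (@vecV K I1 I2).
Proof. by move=> X Y eqXY; apply/matrixP => a b; rewrite -!(vecVE _ a b) eqXY. Qed.

Lemma vecV_mul I1 I2 (B : 'M[K]_I1) (X : 'M[K]_(I1, I2)) (C : 'M[K]_I2) :
  vecV (B *m X *m C^T) = kron C B *m vecV X.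
Proof.
apply/colP => k; have [a [i ->]] := vidx_surj k.
rewrite vecVE !mxE big_vidx exchange_big /=.
apply: eq_bigr => b _; rewrite mxE big_distrl /=; apply: eq_bigr => j _.
by rewrite kronE vecVE !mxE mulrC mulrA.
Qed.

Lemma kron_mul I1 I2 (C C' : 'M[K]_I2) (B B' : 'M[K]_I1) :
  kron C B *m kron C' B' = kron (C *m C') (B *m B').
Proof.
apply/matrixP => p q.
have [a [i ->]] := vidx_surj p; have [b [j ->]] := vidx_surj q.
rewrite kronE !mxE big_vidx exchange_big big_distrl /=.
apply: eq_bigr => j' _; rewrite big_distrr /=; apply: eq_bigr => b' _.
by rewrite !kronE mulrACA.
Qed.

Lemma kron1 I1 I2 : kron (1%:M : 'M[K]_I2) (1%:M : 'M[K]_I1) = 1%:M.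
Proof.
apply/matrixP => p q.
have [a [i ->]] := vidx_surj p; have [b [j ->]] := vidx_surj q.
rewrite kronE !mxE vidx_eq.
by case: (a == b); case: (i == j); rewrite ?mulr1 ?mulr0 ?mul0r.
Qed.

Lemma kron_unitmx I1 I2 (C : 'M[K]_I2) (B : 'M[K]_I1) :
  C \in unitmx -> B \in unitmx -> kron C B \in unitmx.
Proof.
move=> unit_C unit_B; have := @mulmx1_unit _ _ (kron C B) (kron (invmx C) (invmx B)).
by rewrite kron_mul !mulmxV ?kron1 // => /(_ erefl) [].
Qed.

Lemma kron_unit_inj I1 I2 (C : 'M[K]_I2) (B : 'M[K]_I1) (X : 'M[K]_(I1, I2)) :
  kron C B \in unitmx -> B *m X *m C^T = 0 -> X = 0.
Proof.
move=> unit_k /(congr1 (@vecV K _ _)); rewrite vecV_mul linear0.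
move=> /(congr1 (mulmx (invmx (kron C B)))).
by rewrite mulKmx // mulmx0 -(linear0 (@vecV K I1 I2)); exact: vecV_inj.
Qed.

(* Positivity is needed: for [I1 = 0] the Kronecker product is the empty
   matrix, invertible whatever [C] is. *)
Lemma unitmx_kron I1 I2 (C : 'M[K]_I2) (B : 'M[K]_I1) :
  (0 < I1)%N -> (0 < I2)%N ->
  (kron C B \in unitmx) = (C \in unitmx) && (B \in unitmx).
Proof.
move=> I1_gt0 I2_gt0; apply/idP/andP => [unit_k|[]]; last exact: kron_unitmx.
have one_neq0 n : (0 < n)%N -> const_mx 1 != 0 :> 'M[K]_(n, 1).
  move=> n_gt0; apply/eqP => /matrixP/(_ (Ordinal n_gt0) 0).
  by rewrite !mxE; apply/eqP/oner_neq0.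
(* A singular [C] has [v C^T = 0] for some row [v != 0]; then [X := 1 v] is a
   nonzero matrix with [B X C^T = 0]. Symmetrically for [B]. *)
split; apply: contraT; rewrite -unitmx_tr unitmxE unitfE negbK => /det0P [v v_neq0 v0].
- have := kron_unit_inj (X := const_mx 1 *m v) unit_k.
  rewrite -!mulmxA v0 !mulmx0 => /(_ erefl) /mul_col_row_eq0 [/eqP|/eqP].
    by rewrite (negPf (one_neq0 _ I1_gt0)).
  by rewrite (negPf v_neq0).
- have := kron_unit_inj (X := v^T *m (const_mx 1)^T) unit_k.
  rewrite !mulmxA -[B]trmxK -trmx_mul v0 trmx0 !mul0mx => /(_ erefl).
  move/(congr1 trmx); rewrite trmx_mul !trmxK trmx0 => /mul_col_row_eq0 [/eqP|/eqP].
    by rewrite (negPf (one_neq0 _ I2_gt0)).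
  by rewrite (negPf v_neq0).
Qed.

Lemma realign_kron I1 I2 (C : 'M[K]_I2) (B : 'M[K]_I1) :
  realign (kron C B) = vecV C *m (vecV B)^T.
Proof.
apply/matrixP => p q.
have [i [j ->]] := vidx_surj p; have [a [b ->]] := vidx_surj q.
by rewrite realignE kronE [RHS]mxE big_ord1 !mxE !unvidxE.
Qed.

Lemma realign_eq0 I1 I2 (M : 'M[K]_(I1 * I2)) : realign M = 0 -> M = 0.
Proof.
move=> M0; apply/matrixP => p q.
have [a [i ->]] := vidx_surj p; have [b [j ->]] := vidx_surj q.
by rewrite -realignE M0 !mxE.
Qed.

Lemma rank_realign_kron I1 I2 (C : 'M[K]_I2) (B : 'M[K]_I1) :
  kron C B != 0 -> \rank (realign (kron C B)) = 1%N.
Proof.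
move=> k_neq0; apply/eqP; rewrite eqn_leq; apply/andP; split.
  by rewrite realign_kron (leq_trans (mxrankM_maxl _ _)) ?rank_leq_col.
by rewrite lt0n mxrank_eq0; apply: contraNneq k_neq0 => /realign_eq0->.
Qed.

Lemma mulmx_cast1 m n k (e : k = 1%N) (A : 'M[K]_(m, k)) (B : 'M[K]_(k, n)) :
  A *m B = castmx (erefl m, e) A *m castmx (e, erefl n) B.
Proof. by subst k; rewrite !castmx_id. Qed.

(* [mulmx_base] factors a rank-one realignment as a column [u] times a row
   [v]; then [C] and [B] are [u] and [v] un-vectorized. *)
Lemma realign_rank1_kron I1 I2 (M : 'M[K]_(I1 * I2)) :
  \rank (realign M) = 1%N -> exists C B, M = kron C B.
Proof.
move=> rank1; have := mulmx_base (realign M); rewrite (mulmx_cast1 rank1).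
set u := castmx _ (col_base _); set v := castmx _ (row_base _) => uvE.
exists (\matrix_(i, j) u (vidx i j) 0), (\matrix_(a, b) v 0 (vidx a b)).
apply/matrixP => p q.
have [a [i ->]] := vidx_surj p; have [b [j ->]] := vidx_surj q.
by rewrite kronE -realignE -uvE !mxE big_ord1.
Qed.

End KroneckerRealignment.

Section BlockConjugation.
Variables (K : fieldType) (r m n : nat) (e : (r + m)%N = n).
Variables (W1 W1' : 'M[K]_(n, r)) (W2 W2' : 'M[K]_(n, m)).

Let U := castmx (erefl n, e) (row_mx W1 W2).
Let U' := castmx (erefl n, e) (row_mx W1' W2').

Lemma unitmx_ublock (P : 'M[K]_r) (Y : 'M[K]_(r, m)) (Pb : 'M[K]_m) :
  (Ptilde P Y Pb \in unitmx) = (P \in unitmx) && (Pb \in unitmx).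
Proof. by rewrite !unitmxE det_ublock unitrM. Qed.

Lemma conj_ublock_unit P Y Pb :
  U \in unitmx -> U' \in unitmx -> P \in unitmx -> Pb \in unitmx ->
  castmx (erefl n, e) (row_mx W1 W2 *m Ptilde P Y Pb) *m invmx U' \in unitmx.
Proof.
rewrite /U /U'; subst n; rewrite !castmx_id => unit_U unit_U' unit_P unit_Pb.
by rewrite !unitmx_mul unitmx_inv unit_U unit_U' unitmx_ublock unit_P unit_Pb.
Qed.

Lemma conj_ublock_stable P Y Pb :
  U' \in unitmx ->
  castmx (erefl n, e) (row_mx W1 W2 *m Ptilde P Y Pb) *m invmx U' *m W1' = W1 *m P.
Proof.
rewrite /U /U'; subst n; rewrite !castmx_id => unit_U'.
have /(congr1 lsubmx) := mulmxKV unit_U' (row_mx W1 W2 *m Ptilde P Y Pb).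
rewrite mul_mx_row row_mxKl => ->.
by rewrite /Ptilde block_mxEh mul_mx_row row_mxKl mul_row_col mulmx0 addr0.
Qed.

(* The witness is [invmx U *m M *m U'], whose first block column is
   [col_mx Q 0]. *)
Lemma stable_conj_ublock (M : 'M[K]_n) (Q : 'M[K]_r) :
  U \in unitmx -> U' \in unitmx -> M \in unitmx -> M *m W1' = W1 *m Q ->
  exists Pb Y, [/\ Q \in unitmx, Pb \in unitmx &
    castmx (erefl n, e) (row_mx W1 W2 *m Ptilde Q Y Pb) *m invmx U' = M].
Proof.
rewrite /U /U'; subst n; rewrite !castmx_id => unit_U unit_U' unit_M MW1'.
pose Pt := invmx (row_mx W1 W2) *m M *m row_mx W1' W2'.
have UW1 : invmx (row_mx W1 W2) *m W1 = col_mx 1%:M 0.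
  have := mulVmx unit_U; rewrite mul_mx_row scalar_mx_block block_mxEh.
  by case/eq_row_mx.
have PtE : Pt = Ptilde Q (usubmx (rsubmx Pt)) (dsubmx (rsubmx Pt)).
  have lPt : lsubmx Pt = col_mx Q 0.
    by rewrite /Pt mul_mx_row row_mxKl -mulmxA MW1' mulmxA UW1 mul_col_mx mul1mx mul0mx.
  by rewrite /Ptilde block_mxEh -lPt vsubmxK hsubmxK.
have : Pt \in unitmx by rewrite !unitmx_mul unitmx_inv unit_U unit_M unit_U'.
rewrite PtE unitmx_ublock => /andP[unit_Q unit_Pb].
exists (dsubmx (rsubmx Pt)), (usubmx (rsubmx Pt)); split => //.
by rewrite -PtE /Pt !mulmxA mulmxV // mul1mx mulmxK.
Qed.

End BlockConjugation.

Section VectorizedStates.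
Variables (K : fieldType) (I1 I2 : nat).

Definition vecmx r (G : 'I_r -> 'M[K]_(I1, I2)) : 'M[K]_(I1 * I2, r) :=
  \matrix_(p, k) vecV (G k) p 0.

Lemma vecmx_mul r s (G : 'I_r -> 'M[K]_(I1, I2)) (P : 'M[K]_(r, s)) :
  vecmx G *m P = vecmx (fun k => \sum_l P l k *: G l).
Proof.
apply/matrixP => p k; rewrite [LHS]mxE [RHS]mxE linear_sum summxE.
by apply: eq_bigr => l _; rewrite linearZ [RHS]mxE mxE mulrC.
Qed.

Lemma kron_mul_vecmx r (G : 'I_r -> 'M[K]_(I1, I2)) C B :
  kron C B *m vecmx G = vecmx (fun k => B *m G k *m C^T).
Proof.
apply/matrixP => p k; rewrite [RHS]mxE vecV_mul !mxE.
by apply: eq_bigr => q _; rewrite !mxE.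
Qed.

Lemma vecmx_inj r (G G' : 'I_r -> 'M[K]_(I1, I2)) : vecmx G = vecmx G' -> G =1 G'.
Proof.
move=> /matrixP eqGG' k; apply: vecV_inj; apply/colP => p.
by have := eqGG' p k; rewrite !mxE.
Qed.

Lemma kron_mul_vecmxP r (G Gp : 'I_r -> 'M[K]_(I1, I2)) C B (P : 'M[K]_r) :
  kron C B *m vecmx Gp = vecmx G *m P <->
  (forall k, B *m Gp k *m C^T = \sum_l P l k *: G l).
Proof.
rewrite kron_mul_vecmx vecmx_mul; split => [/vecmx_inj //|eqG].
by apply/matrixP => p k; rewrite !mxE eqG.
Qed.

Lemma tseq_nth r (G : 'I_r -> 'M[K]_(I1, I2)) (i : 'I_r) : (tseq G)`_i = G i.
Proof. by rewrite /tseq (nth_map i) ?size_enum_ord // nth_ord_enum. Qed.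

Lemma size_tseq r (G : 'I_r -> 'M[K]_(I1, I2)) : size (tseq G) = r.
Proof. by rewrite /tseq size_map size_enum_ord. Qed.

Lemma free_coef_eq0 (vT : vectType K) n (X : seq vT) :
  size X = n -> free X ->
  forall c : 'I_n -> K, \sum_i c i *: X`_i = 0 -> forall i, c i = 0.
Proof. by move=> <- free_X; apply/(freeP (X := in_tuple X)). Qed.

Lemma Umx0_mul_eq0 r (G : 'I_r -> 'M[K]_(I1, I2))
  (Gb : 'I_(I1 * I2 - r) -> 'M[K]_(I1, I2)) (y : 'cV[K]_(r + (I1 * I2 - r))) :
  complementary G Gb -> Umx0 G Gb *m y = 0 -> y = 0.
Proof.
move=> /basis_free free_GGb Uy0.
have {}Uy0 : \sum_l usubmx y l 0 *: G l + \sum_l dsubmx y l 0 *: Gb l = 0.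
  apply: vecV_inj; apply/colP => p; move/colP/(_ p): Uy0.
  rewrite -{1}[y]vsubmxK mul_row_col -/(vecmx G) -/(vecmx Gb) !vecmx_mul.
  by rewrite linear0 raddfD /= !mxE.
have size_GGb : size (tseq G ++ tseq Gb) = (r + (I1 * I2 - r))%N.
  by rewrite size_cat !size_tseq.
apply/colP => i; rewrite mxE; apply: (free_coef_eq0 size_GGb free_GGb (c := y^~ 0)).
rewrite big_split_ord -[RHS]Uy0.
congr (_ + _); apply: eq_bigr => l _; rewrite mxE nth_cat size_tseq.
  by rewrite /= ltn_ord tseq_nth.
by rewrite /= ltnNge leq_addr addKn tseq_nth.
Qed.

End VectorizedStates.

Lemma castmx_unitmx (K : fieldType) n a (e : a = n) (A : 'M[K]_(n, a)) :
  (forall y : 'cV_a, A *m y = 0 -> y = 0) -> castmx (erefl n, e) A \in unitmx.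
Proof.
subst a; rewrite castmx_id => A_inj.
rewrite -unitmx_tr -row_free_unit; apply: inj_row_free => v vA0.
have /A_inj : A *m v^T = 0 by rewrite -[LHS]trmxK trmx_mul trmxK vA0 trmx0.
by move/(congr1 trmx); rewrite trmxK trmx0.
Qed.

Section SloccKronecker.
Variables (K : fieldType) (r I1 I2 : nat) (hr : (r <= I1 * I2)%N).
Variables (G Gp : 'I_r -> 'M[K]_(I1, I2)) (Gb Gbp : 'I_(I1 * I2 - r) -> 'M[K]_(I1, I2)).
Hypotheses (hGb : complementary G Gb) (hGbp : complementary Gp Gbp).

Lemma Umx0_unit (H : 'I_r -> 'M[K]_(I1, I2))
  (Hb : 'I_(I1 * I2 - r) -> 'M[K]_(I1, I2)) :
  complementary H Hb -> castmx (erefl (I1 * I2), subnKC hr) (Umx0 H Hb) \in unitmx.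
Proof. by move=> hHb; apply: castmx_unitmx => y; apply: Umx0_mul_eq0. Qed.

Lemma slocc_UPU_kron :
  slocc Gp G -> exists P Pb Y C B, [/\ P \in unitmx, Pb \in unitmx,
    UPU hr G Gp Gb Gbp P Y Pb = kron C B & kron C B \in unitmx].
Proof.
move=> [P0 [A1 [A2 [unit_P0 unit_A1 unit_A2 GpE]]]].
have unit_M : kron (invmx A2) (invmx A1) \in unitmx.
  by rewrite kron_unitmx ?unitmx_inv.
have M_stable : kron (invmx A2) (invmx A1) *m vecmx Gp = vecmx G *m P0^T.
  apply/kron_mul_vecmxP => k; rewrite GpE mulmx_sumr mulmx_suml; apply: eq_bigr => l _.
  rewrite mxE -scalemxAr -scalemxAl; congr (_ *: _).
  by rewrite !mulmxA mulVmx // mul1mx -mulmxA -trmx_mul mulVmx // trmx1 mulmx1.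
have [Pb [Y [unit_P unit_Pb UPUE]]] :=
  stable_conj_ublock (Umx0_unit hGb) (Umx0_unit hGbp) unit_M M_stable.
by exists P0^T, Pb, Y, (invmx A2), (invmx A1).
Qed.

Lemma UPU_kron_slocc P Pb Y C B : (0 < I1)%N -> (0 < I2)%N ->
  P \in unitmx -> Pb \in unitmx -> UPU hr G Gp Gb Gbp P Y Pb = kron C B -> slocc Gp G.
Proof.
move=> I1_gt0 I2_gt0 unit_P unit_Pb UPUE.
have unit_k : kron C B \in unitmx.
  by rewrite -UPUE conj_ublock_unit ?Umx0_unit.
have /andP[unit_C unit_B] : (C \in unitmx) && (B \in unitmx) by rewrite -unitmx_kron.
have /kron_mul_vecmxP GpE : kron C B *m vecmx Gp = vecmx G *m P.
  by rewrite -UPUE; apply: conj_ublock_stable; exact: Umx0_unit.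
exists P^T, (invmx B), (invmx C); split; rewrite ?unitmx_tr ?unitmx_inv // => k.
have -> : Gp k = invmx B *m (B *m Gp k *m C^T) *m (invmx C)^T.
  by rewrite trmx_inv mulmxA mulmxK ?unitmx_tr // mulmxA mulVmx // mul1mx.
rewrite GpE mulmx_sumr mulmx_suml; apply: eq_bigr => l _.
by rewrite mxE -scalemxAr -scalemxAl.
Qed.

End SloccKronecker.

Theorem lemma1 (K : numClosedFieldType) (r I1 I2 : nat)
  (hr0 : (0 < r)%N) (hI1 : (0 < I1)%N) (hI2 : (0 < I2)%N)
  (hr : (r <= I1 * I2)%N)
  (G Gp : 'I_r -> 'M[K]_(I1, I2))
  (Gb Gbp : 'I_(I1 * I2 - r) -> 'M[K]_(I1, I2))
  (hG : free (tseq G)) (hGp : free (tseq Gp))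
  (hGb : complementary G Gb) (hGbp : complementary Gp Gbp) :
  (slocc Gp G <->
     exists (P : 'M[K]_r) (Pb : 'M[K]_(I1 * I2 - r)) (Y : 'M[K]_(r, I1 * I2 - r)),
       [/\ P \in unitmx, Pb \in unitmx &
           \rank (realign (UPU hr G Gp Gb Gbp P Y Pb)) = 1%N])
  /\
  (slocc Gp G <->
     exists (P : 'M[K]_r) (Pb : 'M[K]_(I1 * I2 - r)) (Y : 'M[K]_(r, I1 * I2 - r)),
       [/\ P \in unitmx, Pb \in unitmx &
           exists (C : 'M[K]_I2) (B : 'M[K]_I1),
             UPU hr G Gp Gb Gbp P Y Pb = kron C B]).
Proof.
have kron_neq0 (C : 'M[K]_I2) (B : 'M[K]_I1) : kron C B \in unitmx -> kron C B != 0.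
  by apply: unitmx_neq0; rewrite muln_gt0 hI1.
have from_slocc := slocc_UPU_kron hr hGb hGbp.
have to_slocc := UPU_kron_slocc hGb hGbp hI1 hI2.
split; split.
- case/from_slocc => [P [Pb [Y [C [B [unit_P unit_Pb UPUE unit_k]]]]]].
  by exists P, Pb, Y; rewrite UPUE rank_realign_kron ?kron_neq0.
- by case=> [P [Pb [Y [unit_P unit_Pb /realign_rank1_kron [C [B]]]]]]; apply: to_slocc.
- case/from_slocc => [P [Pb [Y [C [B [unit_P unit_Pb UPUE _]]]]]].
  by exists P, Pb, Y; split => //; exists C, B.
- by case=> [P [Pb [Y [unit_P unit_Pb [C [B]]]]]]; apply: to_slocc.
Qed.
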